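(* Run Algorithm 1 with sample size $pn=\frac{n}{e}$, and let $T$ be the set of all tentatively selected items, i.e. the set of items $j$ that arrive in some round $\ell\ge\lceil n/e\rceil$ and satisfy $j\in\mathcal{A}(U^{\le \ell})$ (regardless of whether they are accepted). Then $\mathbb{E}[v(T)]\ge\left(\frac{\alpha}{e}-\frac{\alpha}{n}\right)v(\mathrm{OPT})$.
   Context: Submodular secretary setting. Let $U$ be a finite ground set of $n$ items and $k\ge1$ an integer. Let $v\colon 2^U\to\mathbb{R}_{\ge0}$ be monotone ($S\subseteq T\Rightarrow v(S)\le v(T)$) and submodular ($v(S\cup\{x\})-v(S)\ge v(T\cup\{x\})-v(T)$ for all $S\subseteq T\subseteq U$, $x\in U\setminus T$). Let $\mathrm{OPT}\in\arg\max\{v(S): S\subseteq U, |S|\le k\}$. The items arrive one per round (rounds $1,\dots,n$) in a uniformly random order; for $\ell\in[n]$, $U^{\le \ell}$ denotes the set of items arriving in rounds $1,\dots,\ell$. $\mathcal{A}$ is an offline algorithm that, for every $L\subseteq U$, returns a set $\mathcal{A}(L)\subseteq L$ with $|\mathcal{A}(L)|\le k$ and $v(\mathcal{A}(L))\ge \alpha\max\{v(T):T\subseteq L,|T|\le k\}$, where $\alpha\in(0,1]$; the output $\mathcal{A}(L)$ depends only on the set $L$ (not on the arrival order). Algorithm 1 with sample size $pn$: it rejects the items arriving in rounds $1,\dots,\lceil pn\rceil-1$; in each round $\ell\ge\lceil pn\rceil$, with arriving item $j$, it computes $S^{(\ell)}=\mathcal{A}(U^{\le\ell})$; $j$ is called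 tentatively selected if $j\in S^{(\ell)}$; if $j$ is tentatively selected and fewer than $k$ items have been accepted so far, $j$ is accepted, otherwise rejected. *)

From mathcomp Require Import all_boot all_fingroup.
From Stdlib Require Import Reals.
Set Implicit Arguments. Unset Strict Implicit. Unset Printing Implicit Defensive.

(* Ground set U = the finite type T, n = #|T|.
   An arrival order is a permutation s : {perm T}; the item arriving in
   round i+1 (i : 'I_#|T|, 0-indexed) is s (enum_val i).
   pos s x = 0-indexed round of arrival of x (x arrives in round pos s x + 1). *)
Definition pos (T : finType) (s : {perm T}) (x : T) : nat :=
  nat_of_ord (enum_rank ((s^-1)%g x)).

Definition prefix_set (T : finType) (s : {perm T}) (l : nat) : {set T} :=
  [set x | pos s x < l].

(* ceiling of a real number, as a nat (negative values map to 0) *)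
Definition ceil_nat (x : R) : nat := Z.to_nat (1 - up (- x))%Z.

Definition tentative (T : finType) (A : {set T} -> {set T}) (c : nat)
  (s : {perm T}) : {set T} :=
  [set x | (c <= (pos s x).+1) && (x \in A (prefix_set s (pos s x).+1))].

Definition expect_perm (T : finType) (f : {perm T} -> R) : R :=
  Rdiv (\big[Rplus/0%R]_(s : {perm T}) f s) (INR #|{perm T}|).

Definition monotone_fn (T : finType) (v : {set T} -> R) : Prop :=
  forall S U : {set T}, S \subset U -> Rle (v S) (v U).

Definition submodular_fn (T : finType) (v : {set T} -> R) : Prop :=
  forall (S U : {set T}) (x : T), S \subset U -> x \notin U ->
    Rge (Rminus (v (x |: S)) (v S)) (Rminus (v (x |: U)) (v U)).

(* Let Y_m be the expected value of the set of items tentatively selected in rounds m+1, ..., n.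
   The item of round m+1 is uniformly distributed in the prefix U^{<= m+1}, independently of
   the set selected after it, so by submodularity its expected marginal contribution is at
   least a 1/(m+1) fraction of E[v(A(U^{<= m+1}))] - Y_{m+1}.  As U^{<= m+1} is a uniform
   (m+1)-subset, E[v(A(U^{<= m+1}))] >= alpha (m+1)/n v(OPT).  Hence
   (m+1) Y_m >= m Y_{m+1} + alpha (m+1)/n v(OPT), which unrolls to
   Y_m >= alpha v(OPT) (m/n) (1/m + ... + 1/(n-1)) >= alpha v(OPT) m/n whenever m e <= n.
   Threshold round ceil(n/e) corresponds to m = ceil(n/e) - 1 >= n/e - 1. *)

From HB Require Import structures.
From mathcomp Require Import all_boot all_fingroup.
From Stdlib Require Import Reals Lra Lia.
Set Implicit Arguments. Unset Strict Implicit. Unset Printing Implicit Defensive.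

HB.instance Definition _ := Monoid.isComLaw.Build R 0%R Rplus
  (fun x y z => esym (Rplus_assoc x y z)) Rplus_comm Rplus_0_l.

Section RealSums.
Variable I : finType.
Implicit Types (P : pred I) (F G : I -> R).

Lemma ler_sumR P F G : (forall i, P i -> F i <= G i)%R ->
  (\big[Rplus/0%R]_(i | P i) F i <= \big[Rplus/0%R]_(i | P i) G i)%R.
Proof. by move=> leFG; apply: (big_ind2 Rle) => *; [lra | lra | exact: leFG]. Qed.

Lemma sumR_ge0 P F : (forall i, P i -> 0 <= F i)%R ->
  (0 <= \big[Rplus/0%R]_(i | P i) F i)%R.
Proof. by move=> F_ge0; apply: (big_ind (Rle 0)) => *; [lra | lra | exact: F_ge0]. Qed.

Lemma sumR_const (D : {pred I}) (c : R) :
  \big[Rplus/0%R]_(i in D) c = (INR #|D| * c)%R.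
Proof.
rewrite big_const; elim: #|D| => [|k IH]; first by rewrite /=; lra.
by rewrite iterS IH S_INR; lra.
Qed.

Lemma sumR_constT (c : R) : \big[Rplus/0%R]_(i : I) c = (INR #|I| * c)%R.
Proof. exact: sumR_const. Qed.

Lemma mulR_sumr P F (c : R) :
  \big[Rplus/0%R]_(i | P i) (c * F i)%R = (c * \big[Rplus/0%R]_(i | P i) F i)%R.
Proof. by apply: (big_rec2 (fun a b => a = c * b)%R) => [|i a b _ ->]; lra. Qed.

Lemma sumRB F G :
  \big[Rplus/0%R]_i (F i - G i)%R =
  (\big[Rplus/0%R]_i F i - \big[Rplus/0%R]_i G i)%R.
Proof. by apply: (big_rec3 (fun a b c => a = b - c)%R) => [|i a b c _ ->]; lra. Qed.

End RealSums.

Lemma sumR_indicator (I : finType) (P : pred I) (a : I) :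
  \big[Rplus/0%R]_(i | P i) (if a == i then 1 else 0)%R = (if P a then 1 else 0)%R.
Proof.
rewrite -big_mkcondr; case: (boolP (P a)) => Pa.
  by rewrite (big_pred1 a) // => i /=; rewrite eq_sym andb_idl // => /eqP ->.
by rewrite big_pred0 // => i /=; apply/andP => -[Pi /eqP ai]; rewrite ai Pi in Pa.
Qed.

Lemma setU1_ind (T : finType) (P : {set T} -> Prop) :
  P set0 -> (forall x (B : {set T}), x \notin B -> P B -> P (x |: B)) -> forall B, P B.
Proof.
move=> P0 PU1 B; elim: {B}#|B| {-2}B (eqxx #|B|) => [|k IH] B cardB.
  by rewrite cards_eq0 in cardB; rewrite (eqP cardB).
have [x Bx] : exists x, x \in B by apply/set0Pn; rewrite -card_gt0 (eqP cardB).
rewrite -(setD1K Bx); apply: PU1; first by rewrite setD11.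
by apply: IH; rewrite (cardsD1 x B) Bx eqSS in cardB.
Qed.

Section Submodular.
Variables (T : finType) (v : {set T} -> R).
Hypotheses (v_mono : monotone_fn v) (v_submod : submodular_fn v).

Lemma submod_marginal x (S U : {set T}) : S \subset U ->
  (v (x |: U) - v U <= v (x |: S) - v S)%R.
Proof.
move=> sSU; have [xU | /(v_submod sSU)] := boolP (x \in U); last lra.
rewrite (setUidPr _) ?sub1set //; have := v_mono (subsetUr [set x] S); lra.
Qed.

Lemma submod_union_le_sum (S B : {set T}) :
  (v (S :|: B) - v S <= \big[Rplus/0%R]_(x in B) (v (x |: S) - v S))%R.
Proof.
elim/setU1_ind: B => [|x B xB IH]; first by rewrite big_set0 setU0; lra.
rewrite big_setU1 //= setUCA; have := submod_marginal x (subsetUl S B); lra.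
Qed.

End Submodular.

Section RandomOrder.
Variable T : finType.
Implicit Types (s : {perm T}) (x y : T) (S : {set T}).

Definition first_ranks (l : nat) : {set T} := [set y | enum_rank y < l].

Lemma card_first_ranks l : l <= #|T| -> #|first_ranks l| = l.
Proof.
move=> le_l_n.
have -> : first_ranks l = enum_rank @^-1: [set i : 'I_#|T| | i < l].
  by apply/setP => y; rewrite !inE.
rewrite (on_card_preimset (onW_bij _ (enum_rank_bij T))).
elim: l le_l_n => [|l IH] lt_l_n.
  by apply/eqP; rewrite cards_eq0; apply/eqP/setP => i; rewrite !inE.
have -> : [set i : 'I_#|T| | i < l.+1] = Ordinal lt_l_n |: [set i : 'I_#|T| | i < l].
  by apply/setP => i; rewrite !inE ltnS leq_eqVlt -val_eqE.
by rewrite cardsU1 inE /= ltnn IH // ltnW.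
Qed.

Lemma mem_perm_imset s S x : (x \in s @: S) = ((s^-1)%g x \in S).
Proof. by rewrite -{1}(permKV s x) mem_imset //; exact: perm_inj. Qed.

Lemma prefix_setE s l : prefix_set s l = s @: first_ranks l.
Proof. by apply/setP => x; rewrite mem_perm_imset !inE. Qed.

Lemma sumR_mem_perm_imset S x :
  (INR #|T| * \big[Rplus/0%R]_(s : {perm T}) (if x \in s @: S then 1 else 0))%R =
  (INR #|S| * INR #|{perm T}|)%R.
Proof.
pose c y := \big[Rplus/0%R]_(s : {perm T}) (if (s^-1)%g x == y then 1 else 0)%R.
have c_const y : c y = c x.
  rewrite /c (reindex_inj (mulgI (tperm x y))); apply: eq_bigr => s _.
  rewrite invgM tpermV permM; set w := (s^-1)%g x.
  by rewrite -[X in _ == X](tpermL x y) (inj_eq perm_inj).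
have sum_c : \big[Rplus/0%R]_(y : T) c y = INR #|{perm T}|.
  rewrite exchange_big /= -[RHS]Rmult_1_r -sumR_constT.
  by apply: eq_bigr => s _; rewrite sumR_indicator.
have -> : \big[Rplus/0%R]_(s : {perm T}) (if x \in s @: S then 1 else 0)%R =
           \big[Rplus/0%R]_(y in S) c y.
  rewrite exchange_big /=; apply: eq_bigr => s _.
  by rewrite mem_perm_imset (sumR_indicator (mem S)).
move: sum_c; rewrite !(eq_bigr _ (fun y _ => c_const y)) sumR_const sumR_constT => <-.
by rewrite -!Rmult_assoc (Rmult_comm (INR #|T|)).
Qed.

Variable v : {set T} -> R.
Hypotheses (v_mono : monotone_fn v) (v_submod : submodular_fn v).

Lemma sample_value_ge S B :
  ((INR #|S| * (v B - v set0) + INR #|T| * v set0) * INR #|{perm T}| <=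
   INR #|T| * \big[Rplus/0%R]_(s : {perm T}) v (B :&: s @: S))%R.
Proof.
elim/setU1_ind: B => [|x B _ IH].
  under eq_bigr do rewrite set0I.
  have -> : \big[Rplus/0%R]_(s : {perm T}) v set0 = (INR #|{perm T}| * v set0)%R.
    exact: sumR_constT.
  by apply: Req_le; ring.
have step s : (v (B :&: s @: S) + (v (x |: B) - v B) * (if x \in s @: S then 1 else 0)
    <= v ((x |: B) :&: s @: S))%R.
  rewrite setIUl; case: ifP => [x_img | x_img].
    rewrite (setIidPl (_ : [set x] \subset _)) ?sub1set //.
    by have := submod_marginal v_mono v_submod x (subsetIl B (s @: S)); lra.
  by rewrite (@disjoint_setI0 _ [set x]) ?disjoints1 ?x_img ?set0U //; lra.
have sum_step : (\big[Rplus/0%R]_(s : {perm T}) v (B :&: s @: S) +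
    (v (x |: B) - v B) * \big[Rplus/0%R]_(s : {perm T}) (if x \in s @: S then 1 else 0)
    <= \big[Rplus/0%R]_(s : {perm T}) v ((x |: B) :&: s @: S))%R.
  by rewrite -mulR_sumr -big_split; apply: ler_sumR => s _; apply: step.
have := Rmult_le_compat_l _ _ _ (pos_INR #|T|) sum_step.
have : (INR #|T| * ((v (x |: B) - v B) *
    \big[Rplus/0%R]_(s : {perm T}) (if x \in s @: S then 1 else 0)) =
    (v (x |: B) - v B) * (INR #|S| * INR #|{perm T}|))%R.
  by rewrite -(sumR_mem_perm_imset S x); ring.
lra.
Qed.

Lemma tentative_split A m s :
  tentative A m.+1 s =
  tentative A m.+2 s :|: [set x | pos s x == m] :&: A (prefix_set s m.+1).
Proof.
apply/setP => x; rewrite !inE !ltnS.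
by case: ltngtP => [|//|<-]; rewrite ?orbF.
Qed.

(* For [y] of rank at most [m], [tperm y z * s] exchanges the arrival rounds of [s y] and
   [s z] (both at most [m.+1]) and keeps every later arrival, hence every later tentative
   selection. *)
Section Swap.
Variables (m : nat) (lt_m_n : m < #|T|).
Let z := enum_val (Ordinal lt_m_n).

Let rank_z : nat_of_ord (enum_rank z) = m.
Proof. by rewrite /z enum_valK. Qed.

Lemma pos_swap y s x :
  pos (tperm y z * s)%g x = enum_rank (tperm y z ((s^-1)%g x)).
Proof. by rewrite /pos invgM tpermV permM. Qed.

Lemma pos_swap_le y s x : y \in first_ranks m.+1 ->
  (pos (tperm y z * s)%g x <= m) = (pos s x <= m).
Proof.
rewrite inE ltnS pos_swap /pos => le_y_m.
by case: tpermP => [->|->|//]; rewrite rank_z le_y_m leqnn.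
Qed.

Lemma pos_swap_gt y s x : y \in first_ranks m.+1 -> m < pos s x ->
  pos (tperm y z * s)%g x = pos s x.
Proof.
rewrite inE ltnS pos_swap /pos => le_y_m.
case: tpermP => [->|->|//]; last by rewrite rank_z ltnn.
by move=> /leq_trans/(_ le_y_m); rewrite ltnn.
Qed.

Lemma pos_swap_eq y s x : (pos (tperm y z * s)%g x == m) = (x == s y).
Proof.
rewrite pos_swap -rank_z (inj_eq val_inj) (inj_eq enum_rank_inj).
by rewrite -[X in _ == X](tpermL y z) (inj_eq perm_inj) -(inj_eq (@perm_inj _ s)) permKV.
Qed.

Lemma prefix_swap y s p : y \in first_ranks m.+1 -> m < p ->
  prefix_set (tperm y z * s)%g p = prefix_set s p.
Proof.
move=> y_first lt_m_p; apply/setP => x; rewrite !inE.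
case: (leqP (pos s x) m) => [le_m | gt_m]; last by rewrite pos_swap_gt.
have := le_m; rewrite -(pos_swap_le _ _ y_first) => le_m'.
by rewrite (leq_ltn_trans le_m lt_m_p) (leq_ltn_trans le_m' lt_m_p).
Qed.

Lemma tentative_swap A y s : y \in first_ranks m.+1 ->
  tentative A m.+2 (tperm y z * s)%g = tentative A m.+2 s.
Proof.
move=> y_first; apply/setP => x; rewrite !inE !ltnS.
case: (leqP (pos s x) m) => [le_m | gt_m].
  by rewrite ltnNge (pos_swap_le _ _ y_first) le_m.
by rewrite pos_swap_gt // gt_m prefix_swap // ltnS ltnW.
Qed.

Lemma tentativeS_swap A y s : y \in first_ranks m.+1 ->
  tentative A m.+1 (tperm y z * s)%g =
  tentative A m.+2 s :|: [set s y] :&: A (prefix_set s m.+1).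
Proof.
move=> y_first; rewrite tentative_split tentative_swap // prefix_swap //.
by congr (_ :|: (_ :&: _)); apply/setP => x; rewrite !inE pos_swap_eq.
Qed.

(* Averaged over the [m.+1] exchanges, the item arriving in round [m.+1] is a uniform
   element of the prefix, so its expected marginal gain is [1 / m.+1] of the total. *)
Lemma tentative_gain (A : {set T} -> {set T}) : (forall L, A L \subset L) ->
  (\big[Rplus/0%R]_(s : {perm T}) (v (A (prefix_set s m.+1)) - v (tentative A m.+2 s))
   <= INR m.+1 * \big[Rplus/0%R]_(s : {perm T})
                   (v (tentative A m.+1 s) - v (tentative A m.+2 s)))%R.
Proof.
move=> A_sub; rewrite -[INR m.+1](congr1 INR (card_first_ranks lt_m_n)) -sumR_const.
under eq_bigr => y _ do rewrite (reindex_inj (mulgI (tperm y z))).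
rewrite exchange_big /=; apply: ler_sumR => s _.
set L := prefix_set s m.+1; set S := tentative A m.+2 s.
under eq_bigr => y y_first do rewrite tentativeS_swap // tentative_swap //.
rewrite -(big_imset (fun x => v (S :|: [set x] :&: A L) - v S)%R); last first.
  by move=> ? ? _ _; apply: perm_inj.
rewrite -prefix_setE -/L (big_setID (A L)) /= (setIidPr (A_sub L)).
rewrite [X in (_ + X)%R]big1 => [|x /setDP [_ xAL]]; last first.
  by rewrite (@disjoint_setI0 _ [set x]) ?disjoints1 // setU0 Rminus_diag.
rewrite Rplus_0_r; under eq_bigr => x xAL do rewrite (setIidPl _) ?sub1set // setUC.
have := submod_union_le_sum v_mono v_submod S (A L).
have := v_mono (subsetUr S (A L)); lra.
Qed.

End Swap.

Definition tentative_sum (A : {set T} -> {set T}) (c : nat) : R :=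
  \big[Rplus/0%R]_(s : {perm T}) v (tentative A c s).

Lemma tentative_recurrence (A : {set T} -> {set T}) (B : {set T}) (alpha : R) m :
  (forall L, A L \subset L) -> (0 <= alpha)%R ->
  (forall L, alpha * v (B :&: L) <= v (A L))%R -> (0 <= v set0)%R -> m < #|T| ->
  (INR m * tentative_sum A m.+2 +
   INR m.+1 * (alpha * INR #|{perm T}| * v B / INR #|T|) <=
   INR m.+1 * tentative_sum A m.+1)%R.
Proof.
move=> A_sub alpha_ge0 A_approx v0_ge0 lt_m_n.
have n_gt0 : (0 < INR #|T|)%R by apply: lt_0_INR; apply/ltP; apply: leq_ltn_trans lt_m_n.
have gain := tentative_gain lt_m_n A_sub; rewrite !sumRB in gain.
have := sample_value_ge (first_ranks m.+1) B.
under eq_bigr => s _ do rewrite -prefix_setE.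
rewrite card_first_ranks // => sample.
have approx : (alpha * \big[Rplus/0%R]_(s : {perm T}) v (B :&: prefix_set s m.+1) <=
    \big[Rplus/0%R]_(s : {perm T}) v (A (prefix_set s m.+1)))%R.
  by rewrite -mulR_sumr; apply: ler_sumR => s _; apply: A_approx.
rewrite /tentative_sum in gain *.
set Y0 := \big[Rplus/0%R]_(s : {perm T}) v (tentative A m.+1 s) in gain *.
set Y1 := \big[Rplus/0%R]_(s : {perm T}) v (tentative A m.+2 s) in gain *.
set SA := \big[Rplus/0%R]_(s : {perm T}) v (A (prefix_set s m.+1)) in gain approx.
set SB := \big[Rplus/0%R]_(s : {perm T}) v (B :&: prefix_set s m.+1) in sample approx.
have le_p_n : (INR m.+1 <= INR #|T|)%R by apply: le_INR; apply/leP.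
have N_ge0 := pos_INR #|{perm T}|.
have expected_gain : (INR m.+1 * (alpha * INR #|{perm T}| * v B / INR #|T|) <= SA)%R.
  apply: (Rmult_le_reg_l (INR #|T|)) => //.
  have -> : (INR #|T| * (INR m.+1 * (alpha * INR #|{perm T}| * v B / INR #|T|)) =
      alpha * (INR m.+1 * INR #|{perm T}| * v B))%R by field; lra.
  have : (INR m.+1 * INR #|{perm T}| * v B <= INR #|T| * SB)%R.
    have : (0 <= (INR #|T| - INR m.+1) * (INR #|{perm T}| * v set0))%R.
      by apply: Rmult_le_pos; [lra | exact: Rmult_le_pos].
    lra.
  by move/(Rmult_le_compat_l _ _ _ alpha_ge0); nra.
rewrite S_INR in gain expected_gain *; lra.
Qed.

End RandomOrder.

Fixpoint harmonic (m d : nat) : R :=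
  if d is d'.+1 then (/ INR m + harmonic m.+1 d')%R else 0%R.

Lemma le_exp_harmonic m d : 0 < m ->
  (INR (m + d) <= INR m * exp (harmonic m d))%R.
Proof.
elim: d m => [|d IH] m m_gt0 /=; first by rewrite addn0 exp_0; lra.
have m_pos : (0 < INR m)%R by apply: lt_0_INR; apply/ltP.
have step : (INR m.+1 <= INR m * exp (/ INR m))%R.
  have := Rmult_le_compat_l _ _ _ (Rlt_le _ _ m_pos) (exp_ineq1_le (/ INR m)).
  by rewrite Rmult_plus_distr_l Rmult_1_r Rinv_r ?S_INR; lra.
rewrite exp_plus -Rmult_assoc -addSnnS.
apply: Rle_trans (IH m.+1 isT) _.
exact: Rmult_le_compat_r (Rlt_le _ _ (exp_pos _)) step.
Qed.

Lemma harmonic_ge1 m d : 0 < m -> (INR m * exp 1 <= INR (m + d))%R ->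
  (1 <= harmonic m d)%R.
Proof.
move=> m_gt0 le_me; have m_pos : (0 < INR m)%R by apply: lt_0_INR; apply/ltP.
apply: Rnot_lt_le => /exp_increasing lt_exp.
have := le_exp_harmonic d m_gt0; have := Rmult_lt_compat_l _ _ _ m_pos lt_exp; lra.
Qed.

Section Recurrence.
Variables (Y : nat -> R) (K : R) (n : nat).
Hypotheses (K_ge0 : (0 <= K)%R) (Y_ge0 : forall m, (0 <= Y m)%R).
Hypothesis Y_rec : forall m, m < n ->
  (INR m * Y m.+1 + INR m.+1 * K <= INR m.+1 * Y m)%R.

Lemma recurrence_harmonic d m : m + d = n -> (K * INR m * harmonic m d <= Y m)%R.
Proof.
elim: d m => [|d IH] m md_n /=; first by rewrite Rmult_0_r.
have lt_m_n : m < n by rewrite -md_n addnS ltnS leq_addr.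
have := IH m.+1 (etrans (addSnnS m d) md_n).
have := Y_rec lt_m_n; rewrite S_INR.
have : (K * INR m * / INR m <= K)%R.
  case: (posnP m) => [-> | m_gt0]; first by rewrite Rmult_0_r Rmult_0_l.
  rewrite Rmult_assoc Rinv_r ?Rmult_1_r; first exact: Rle_refl.
  by apply: not_0_INR => m0; move: m_gt0; rewrite m0.
set a := INR m; set h := harmonic m.+1 d => le_K rec IHm.
have a_ge0 : (0 <= a)%R by apply: pos_INR.
have a1_pos : (0 < a + 1)%R by lra.
have IHm' := Rmult_le_compat_l _ _ _ a_ge0 IHm.
have le_K' := Rmult_le_compat_l _ _ _ (Rlt_le _ _ a1_pos) le_K.
by apply: (Rmult_le_reg_l (a + 1)) => //; nra.
Qed.

Lemma recurrence_lower_bound m : (INR m * exp 1 <= INR n)%R -> (K * INR m <= Y m)%R.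
Proof.
move=> le_me_n; case: (posnP m) => [-> | m_gt0]; first by rewrite Rmult_0_r.
have Km_ge0 : (0 <= K * INR m)%R by apply: Rmult_le_pos => //; apply: pos_INR.
have le_m_n : m <= n.
  apply/leP/INR_le; have := pos_INR m; have := exp_ineq1_le 1; nra.
have le_H : (1 <= harmonic m (n - m))%R by apply: harmonic_ge1; rewrite ?subnKC.
have := recurrence_harmonic (subnKC le_m_n); nra.
Qed.

End Recurrence.

Lemma ceil_nat_spec x : (0 < x)%R ->
  exists m, ceil_nat x = m.+1 /\ (x - 1 <= INR m < x)%R.
Proof.
move=> x_gt0; rewrite /ceil_nat; have [lb ub] := archimed (- x).
set c := (1 - up (- x))%Z.
have c_pos : (0 < c)%Z by apply: lt_IZR; rewrite minus_IZR; lra.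
exists (Z.to_nat (c - 1)); split; first lia.
rewrite INR_IZR_INZ Znat.Z2Nat.id; last lia.
by rewrite !minus_IZR; lra.
Qed.

Theorem mainTheorem2 (T : finType) (k : nat) (v : {set T} -> R)
  (A : {set T} -> {set T}) (alpha : R) (OPT : {set T}) :
  0 < #|T| ->
  0 < k ->
  (forall S, Rle 0 (v S)) ->
  monotone_fn v ->
  submodular_fn v ->
  #|OPT| <= k ->
  (forall S : {set T}, #|S| <= k -> Rle (v S) (v OPT)) ->
  Rlt 0 alpha -> Rle alpha 1 ->
  (forall L : {set T}, A L \subset L /\ #|A L| <= k /\
     forall S : {set T}, S \subset L -> #|S| <= k ->
       Rle (Rmult alpha (v S)) (v (A L))) ->
  Rle (Rmult (Rminus (Rdiv alpha (exp 1)) (Rdiv alpha (INR #|T|))) (v OPT))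
      (expect_perm (fun s => v (tentative A (ceil_nat (Rdiv (INR #|T|) (exp 1))) s))).
Proof.
move=> n_gt0 _ v_ge0 v_mono v_submod OPT_k _ alpha_gt0 _ A_spec.
have n_pos : (0 < INR #|T|)%R by apply/lt_0_INR/ltP.
have N_pos : (0 < INR #|{perm T}|)%R by apply/lt_0_INR/ltP/card_gt0P; exists 1%g.
have e_pos := exp_pos 1.
have A_sub L : A L \subset L by case: (A_spec L).
have A_approx L : (alpha * v (OPT :&: L) <= v (A L))%R.
  case: (A_spec L) => _ [_]; apply; first exact: subsetIr.
  exact: leq_trans (subset_leq_card (subsetIl _ _)) OPT_k.
set K := (alpha * INR #|{perm T}| * v OPT / INR #|T|)%R.
have K_ge0 : (0 <= K)%R.
  by apply/Rle_mult_inv_pos/n_pos/Rmult_le_pos/v_ge0/Rmult_le_pos; lra.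
have [m [-> [le_m lt_m]]] : exists m, ceil_nat (INR #|T| / exp 1) = m.+1 /\
    (INR #|T| / exp 1 - 1 <= INR m < INR #|T| / exp 1)%R.
  by apply: ceil_nat_spec; apply: Rdiv_lt_0_compat.
have lower : (K * INR m <= tentative_sum v A m.+1)%R.
  apply: (recurrence_lower_bound (Y := fun l => tentative_sum v A l.+1) (n := #|T|)) => //.
  - by move=> l; apply: sumR_ge0.
  - by move=> l; apply: tentative_recurrence => //; lra.
  have := Rmult_lt_compat_r _ _ _ e_pos lt_m.
  by rewrite /Rdiv Rmult_assoc Rinv_l ?Rmult_1_r; lra.
rewrite /expect_perm -/(tentative_sum v A m.+1).
apply: Rle_trans (Rmult_le_compat_r _ _ _ (Rlt_le _ _ (Rinv_0_lt_compat _ N_pos)) lower).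
have -> : (K * INR m * / INR #|{perm T}| = alpha * v OPT / INR #|T| * INR m)%R.
  by rewrite /K; field; lra.
have -> : ((alpha / exp 1 - alpha / INR #|T|) * v OPT =
    alpha * v OPT / INR #|T| * (INR #|T| / exp 1 - 1))%R by field; lra.
apply: Rmult_le_compat_l le_m.
by apply/Rle_mult_inv_pos/n_pos/Rmult_le_pos/v_ge0; lra.
Qed.
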